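(* For all $r,t>0$ the function $z\mapsto u(z;r,t)$, $z\in\left[0,\frac{Q(r)P(r)d}{Q(t)P(t)}\right]$, is the profile of a rotationally symmetric hypersurface of constant mean curvature $\eta(t)=\frac{nQ(t)P(t)}{d}$, i.e. $H(u(\cdot;r,t))\equiv\eta(t)$ on this interval, and moreover \[ u_z(0;r,t)=u_z\!\left(\tfrac{Q(r)P(r)d}{Q(t)P(t)};r,t\right)=0 . \]
   Context: Fix an integer $n\ge2$ and $d>0$. Define $Q:(0,\infty)\to\mathbb{R}$ by $Q(t)=\frac{1-t^{n-1}}{1-t^n}$ for $t\neq1$ and $Q(1)=\frac{n-1}{n}$. For $0\le x\le1$, $t>0$ define $R(x;t)=\frac{1}{|1-t|}\sqrt{\left(\frac{(1-(1-t)x)^{n-1}}{1-Q(t)+Q(t)(1-(1-t)x)^n}\right)^2-1}$ for $t\ne1$ and $R(x;1)=\sqrt{(n-1)(1-x)x}$. Let $\zeta(x;t)=\int_x^1R(\tilde x;t)^{-1}\,d\tilde x$ for $0\le x<1$, $\zeta(1;t)=0$, $P(t)=\zeta(0;t)$, and let $\zeta^{-1}(\cdot;t)$ denote the inverse of $x\mapsto\zeta(x;t)$ (so $\zeta^{-1}(\zeta(x;t);t)=x$). For $r,t>0$ and $z\in\left[0,\frac{Q(r)P(r)d}{Q(t)P(t)}\right]$ set $u(z;r,t)=\frac{Q(r)d}{P(t)Q(t)}\left(1-(1-r)\zeta^{-1}\left(\frac{Q(t)P(t)z}{Q(r)d};r\right)\right)$, and let $\eta(t)=\frac{nQ(t)P(t)}{d}$.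 Subscripts denote partial derivatives. For a positive $C^2$ function $f$ of $z$, the mean curvature of the hypersurface of revolution $\{(z,f(z)\theta):\theta\in\mathbb{S}^{n-1}\}\subset\mathbb{R}^{n+1}$ is $H(f)=\frac{-f_{zz}}{(1+f_z^2)^{3/2}}+\frac{n-1}{f\sqrt{1+f_z^2}}$. *)

From Stdlib Require Import Reals Lra ClassicalEpsilon.
Open Scope R_scope.

Definition Qf (n : nat) (t : R) : R :=
  if Req_EM_T t 1 then INR (n - 1) / INR n
  else (1 - t ^ (n - 1)) / (1 - t ^ n).

Definition Rprof (n : nat) (x t : R) : R :=
  if Req_EM_T t 1 then sqrt (INR (n - 1) * (1 - x) * x)
  else / Rabs (1 - t) *
       sqrt ((((1 - (1 - t) * x) ^ (n - 1)) /
              (1 - Qf n t + Qf n t * (1 - (1 - t) * x) ^ n)) ^ 2 - 1).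

Definition improper_integral (f : R -> R) (a b l : R) : Prop :=
  forall eps, 0 < eps -> exists delta, 0 < delta /\
    forall a' b', a < a' < a + delta -> b - delta < b' < b -> a' <= b' ->
      exists pr : Riemann_integrable f a' b', Rabs (RiemannInt pr - l) < eps.

Definition zeta (n : nat) (x t : R) : R :=
  if Rlt_dec x 1 then
    epsilon (inhabits 0) (fun l => improper_integral (fun y => / Rprof n y t) x 1 l)
  else 0.

Definition Pf (n : nat) (t : R) : R := zeta n 0 t.

Definition zeta_inv (n : nat) (s t : R) : R :=
  epsilon (inhabits 0) (fun x => 0 <= x <= 1 /\ zeta n x t = s).

Definition u (n : nat) (d z r t : R) : R :=
  Qf n r * d / (Pf n t * Qf n t) *
  (1 - (1 - r) * zeta_inv n (Qf n t * Pf n t * z / (Qf n r * d)) r).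

Definition eta (n : nat) (d t : R) : R := INR n * Qf n t * Pf n t / d.

(* mean curvature H(f) at a point, given f, f_z, f_zz there;
   (1+f_z^2)^(3/2) written as sqrt(1+f_z^2)^3 *)
Definition Hcurv (n : nat) (f f1 f2 : R) : R :=
  - f2 / (sqrt (1 + f1 ^ 2)) ^ 3 + INR (n - 1) / (f * sqrt (1 + f1 ^ 2)).

Definition deriv_within (a b : R) (g : R -> R) (l x : R) : Prop :=
  forall eps, 0 < eps -> exists delta, 0 < delta /\
    forall h, h <> 0 -> Rabs h < delta -> a <= x + h <= b ->
      Rabs ((g (x + h) - g x) / h - l) < eps.

(* Write F(x) = R(x;r)^2, so that zeta(x) = int_x^1 F^(-1/2).  Zf
      is continuous, strictly decreasing, satisfies Zf' = -F^(-1/2), and it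
      is the improper integral defining zeta.
   3. The inverse X of Zf is continuous with X' = -sqrt(F o X); hence the
      rescaled profile z |-> (1 - a X(k z)) / k has first derivative
      a sqrt(F(X(k z))) and second derivative -a k F'(X(k z)) / 2, and its
      slope vanishes at both ends of [0, Zf(0)/k].
   4. The concrete F coming from R(.;r) is admissible (a few polynomial
      inequalities) and satisfies the ODE which, evaluated along the
      profile, says exactly H(u) = n Q(r) k = eta(t).  For r = 1 the
      same statements hold with a = 1 - r = 0 (a cylinder).
   The theorem then follows by choosing k = Q(t)P(t) / (Q(r) d). *)
From Stdlib Require Import Reals Lra Lia ClassicalEpsilon FunctionalExtensionality.
From Coquelicot Require Import Coquelicot.
Open Scope R_scope.

Definition cont_within (a b : R) (g : R -> R) (x : R) : Prop :=
  forall eps, 0 < eps -> exists delta, 0 < delta /\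
    forall y, a <= y <= b -> Rabs (y - x) < delta -> Rabs (g y - g x) < eps.

Definition clamp (a b s : R) : R := Rmax a (Rmin b s).

Lemma clamp_in a b s : a <= b -> a <= clamp a b s <= b.
Proof. intros; unfold clamp, Rmax, Rmin; repeat destruct Rle_dec; lra. Qed.

Lemma clamp_id a b s : a <= s <= b -> clamp a b s = s.
Proof. intros; unfold clamp, Rmax, Rmin; repeat destruct Rle_dec; lra. Qed.

Lemma clamp_lipschitz a b s1 s2 : a <= b ->
  Rabs (clamp a b s1 - clamp a b s2) <= Rabs (s1 - s2).
Proof.
  intros; unfold clamp, Rmax, Rmin, Rabs;
  repeat destruct Rle_dec; repeat destruct Rcase_abs; lra.
Qed.

(* Epsilon-delta introduction and elimination rules for continuity_pt,
   without the side condition y <> x of its definition. *)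
Lemma continuity_pt_intro f x :
  (forall eps, 0 < eps -> exists delta, 0 < delta /\
     forall y, Rabs (y - x) < delta -> Rabs (f y - f x) < eps) ->
  continuity_pt f x.
Proof.
  intros H eps Heps. destruct (H eps Heps) as [d [Hd Hd']].
  exists d; split; auto. intros y [_ Hy]. apply Hd'. exact Hy.
Qed.

Lemma continuity_pt_elim f x : continuity_pt f x ->
  forall eps, 0 < eps -> exists delta, 0 < delta /\
     forall y, Rabs (y - x) < delta -> Rabs (f y - f x) < eps.
Proof.
  intros H eps Heps. destruct (H eps Heps) as [d [Hd Hd']].
  exists d; split; auto. intros y Hy.
  destruct (Req_dec y x) as [->|Hne].
  - rewrite Rminus_diag, Rabs_R0; auto.
  - apply Hd'. repeat split; auto.
Qed.

Lemma derivable_pt_lim_continuity f x l :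
  derivable_pt_lim f x l -> continuity_pt f x.
Proof. intros H. apply derivable_continuous_pt. exists l; exact H. Qed.

Lemma cont_within_of_continuity a b g x : continuity_pt g x -> cont_within a b g x.
Proof.
  intros H eps Heps. destruct (continuity_pt_elim g x H eps Heps) as [d [Hd H']].
  exists d; split; auto.
Qed.

Lemma cont_within_comp a b g phi x : cont_within a b g x ->
  continuity_pt phi (g x) -> cont_within a b (fun s => phi (g s)) x.
Proof.
  intros Hg Hp eps Heps.
  destruct (continuity_pt_elim phi (g x) Hp eps Heps) as [d1 [Hd1 H1]].
  destruct (Hg d1 Hd1) as [d2 [Hd2 H2]]. exists d2; split; auto.
Qed.

Lemma cont_within_dilate a b g k x : 0 < k ->
  cont_within a b g (k * x) -> cont_within (a / k) (b / k) (fun s => g (k * s)) x.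
Proof.
  intros Hk Hg eps Heps. destruct (Hg eps Heps) as [d [Hd H]].
  exists (d / k); split; [apply Rdiv_lt_0_compat; auto|].
  intros y [Hy1 Hy2] Hyx. apply H.
  - apply (Rmult_le_compat_l k) in Hy1, Hy2; try lra.
    field_simplify in Hy1; field_simplify in Hy2; lra.
  - replace (k * y - k * x) with (k * (y - x)) by ring.
    rewrite Rabs_mult, (Rabs_right k) by lra.
    apply (Rmult_lt_compat_l k) in Hyx; auto. field_simplify in Hyx; lra.
Qed.

Lemma continuity_clamp a b g : a <= b ->
  (forall x, a <= x <= b -> cont_within a b g x) ->
  forall x, continuity_pt (fun s => g (clamp a b s)) x.
Proof.
  intros Hab Hcw x. apply continuity_pt_intro. intros eps Heps.
  destruct (Hcw (clamp a b x) (clamp_in a b x Hab) eps Heps) as [d [Hd H]].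
  exists d; split; auto. intros y Hy. apply H; [apply clamp_in; auto|].
  eapply Rle_lt_trans; [apply clamp_lipschitz; auto | auto].
Qed.

(* This is the mean
   value theorem applied to g o clamp. *)
Lemma deriv_within_of_interior a b g k : a < b ->
  (forall x, a <= x <= b -> cont_within a b g x) ->
  (forall x, a < x < b -> derivable_pt_lim g x (k x)) ->
  (forall x, a <= x <= b -> cont_within a b k x) ->
  forall x, a <= x <= b -> deriv_within a b g (k x) x.
Proof.
  intros Hab Hg Hd Hk x Hx eps Heps.
  destruct (Hk x Hx eps Heps) as [del [Hdel H]].
  exists del; split; auto. intros h Hh0 Hh Hxh.
  set (gc := fun s => g (clamp a b s)).
  destruct (MVT_gen gc x (x + h) k) as [c [Hc Heq]].
  - intros y Hy.
    assert (Hy' : a < y < b) by (unfold Rmin, Rmax in Hy; destruct Rle_dec; lra).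
    apply is_derive_ext_loc with g.
    + apply locally_interval with (Finite a) (Finite b); simpl; try lra.
      intros z Hz1 Hz2. unfold gc. rewrite clamp_id; auto; split; lra.
    + apply is_derive_Reals, Hd; auto.
  - intros y _. apply continuity_clamp; [lra | exact Hg].
  - unfold gc in Heq. rewrite (clamp_id a b x Hx), (clamp_id a b (x + h) Hxh) in Heq.
    replace ((g (x + h) - g x) / h) with (k c) by (rewrite Heq; field; auto).
    unfold Rmin, Rmax in Hc; destruct Rle_dec; apply H;
      apply Rabs_def2 in Hh; try apply Rabs_def1; lra.
Qed.

(* asin (extended by PI/2 beyond 1) is continuous at 1, hence on [0,1]. *)
Lemma asin_continuity_1 : continuity_pt asin 1.
Proof.
  apply continuity_pt_intro. intros eps Heps.
  pose proof PI_RGT_0.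
  set (e := Rmin eps (PI / 2)).
  assert (He : 0 < e) by (apply Rmin_pos; lra).
  assert (He2 : e <= PI / 2) by apply Rmin_r.
  assert (He3 : e <= eps) by apply Rmin_l.
  set (m := sin (PI / 2 - e)).
  assert (Hm : m < 1) by (unfold m; rewrite <- sin_PI2; apply sin_increasing_1; lra).
  assert (Hm0 : 0 <= m) by (apply sin_ge_0; lra).
  exists (1 - m); split; [lra|]. intros y Hy. rewrite asin_1.
  destruct (Rle_dec 1 y).
  - unfold asin. destruct (Rle_dec y (-1)); [lra|]. destruct (Rle_dec 1 y); [|lra].
    rewrite Rminus_diag, Rabs_R0; lra.
  - apply Rabs_def2 in Hy.
    pose proof (asin_bound y).
    assert (PI / 2 - e < asin y).
    { apply sin_increasing_0; try lra. rewrite sin_asin by lra. fold m. lra. }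
    apply Rabs_def1; lra.
Qed.

Lemma asin_continuity y : 0 <= y <= 1 -> continuity_pt asin y.
Proof.
  intros Hy. destruct (Req_dec y 1) as [->|Hne]; [apply asin_continuity_1|].
  apply derivable_continuous_pt, derivable_pt_asin; lra.
Qed.

Lemma asin_derivative y : -1 < y < 1 ->
  derivable_pt_lim asin y (1 / sqrt (1 - y²)).
Proof.
  intros Hy. rewrite <- (derive_pt_asin y Hy).
  destruct (derivable_pt_asin y Hy) as [l Hl]. exact Hl.
Qed.

Lemma asin_increasing x y : 0 <= x < y -> y <= 1 -> asin x < asin y.
Proof.
  intros Hx Hy. pose proof (asin_bound x). pose proof (asin_bound y).
  apply sin_increasing_0; try lra. rewrite !sin_asin; lra.
Qed.

Lemma quotient_estimate A q y e : 0 < e -> Rabs y < 1 / 2 -> Rabs (q - A) < e / 4 ->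
  Rabs y < e / (4 * (Rabs A + 1)) -> Rabs (q / (1 - y) - A) < e.
Proof.
  intros He Hy Hq Hy2. apply Rabs_def2 in Hy.
  replace (q / (1 - y) - A) with ((q - A + A * y) * / (1 - y)) by (field; lra).
  rewrite Rabs_mult, Rabs_inv, (Rabs_right (1 - y)) by lra.
  assert (H2 : Rabs (q - A + A * y) <= Rabs (q - A) + Rabs A * Rabs y).
  { rewrite <- Rabs_mult. apply Rabs_triang. }
  pose proof (Rabs_pos A). pose proof (Rabs_pos y).
  assert (H3 : Rabs A * Rabs y <= e / 4).
  { apply Rle_trans with (Rabs A * (e / (4 * (Rabs A + 1)))).
    - apply Rmult_le_compat_l; lra.
    - apply Rmult_le_reg_r with (4 * (Rabs A + 1)); [nra|].
      field_simplify; [nra|lra]. }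
  assert (H4 : / (1 - y) < 2).
  { apply Rmult_lt_reg_r with (1 - y); [lra|]. field_simplify; lra. }
  assert (/ (1 - y) > 0) by (apply Rinv_0_lt_compat; lra).
  pose proof (Rabs_pos (q - A + A * y)). nra.
Qed.

Lemma slope_quotient_limit F x0 D s : derivable_pt_lim F x0 D -> Rabs s <= 1 ->
  forall eps, 0 < eps -> exists delta, 0 < delta /\
    forall h, h <> 0 -> Rabs h < delta ->
      Rabs ((F (x0 + h) - F x0) / h / (1 - s * h) - D) < eps.
Proof.
  intros HF Hs eps Heps.
  destruct (HF (eps / 4) ltac:(lra)) as [del Hdel].
  set (e := eps / (4 * (Rabs D + 1))).
  assert (He : 0 < e).
  { apply Rdiv_lt_0_compat; auto. pose proof (Rabs_pos D); lra. }
  exists (Rmin (1 / 2) (Rmin del e)).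
  split; [repeat apply Rmin_pos; try lra; apply cond_pos|].
  intros h Hh0 Hh.
  pose proof (Rmin_l (1 / 2) (Rmin del e)). pose proof (Rmin_r (1 / 2) (Rmin del e)).
  pose proof (Rmin_l del e). pose proof (Rmin_r del e).
  assert (Hsh : Rabs (s * h) <= Rabs h).
  { rewrite Rabs_mult. pose proof (Rabs_pos h). nra. }
  apply quotient_estimate; fold e; try lra. apply Hdel; auto; lra.
Qed.

(* Then F(x) ~ x (1 - x), so F^(-1/2) is integrable on (0,1). *)
Record admissible (F F' : R -> R) : Prop := {
  adm_deriv : forall x, 0 <= x <= 1 -> derivable_pt_lim F x (F' x);
  adm_zero_0 : F 0 = 0;
  adm_zero_1 : F 1 = 0;
  adm_slope_0 : 0 < F' 0;
  adm_slope_1 : F' 1 < 0;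
  adm_pos : forall x, 0 < x < 1 -> 0 < F x }.

Lemma admissible_nonneg F F' x : admissible F F' -> 0 <= x <= 1 -> 0 <= F x.
Proof.
  intros HA Hx.
  destruct (Req_dec x 0) as [->|H0]; [rewrite (adm_zero_0 _ _ HA); lra|].
  destruct (Req_dec x 1) as [->|H1]; [rewrite (adm_zero_1 _ _ HA); lra|].
  apply Rlt_le, HA; lra.
Qed.

Definition Fquot (F F' : R -> R) (x : R) : R :=
  if Req_EM_T x 0 then F' 0 else if Req_EM_T x 1 then - F' 1
  else F x / (x * (1 - x)).

(* Integrand of zeta after the substitution x = sin^2 th:
   dx / sqrt(F x) = 2 dth / sqrt(Fquot (sin^2 th)). *)
Definition Psi (F F' : R -> R) (th : R) : R := 2 * / sqrt (Fquot F F' (sin th ^ 2)).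
Definition Phi (F F' : R -> R) (th : R) : R := RInt (Psi F F') th (PI / 2).

(* Zf x = int_x^1 F^(-1/2), as a proper integral. *)
Definition Zf (F F' : R -> R) (x : R) : R := Phi F F' (asin (sqrt x)).

Lemma sin2_in th : 0 <= sin th ^ 2 <= 1.
Proof. pose proof (SIN_bound th). split; [apply pow2_ge_0 | simpl; nra]. Qed.

Section Admissible.
Variables F F' : R -> R.
Hypothesis HA : admissible F F'.

Lemma Fquot_generic x : x <> 0 -> x <> 1 -> Fquot F F' x = F x / (x * (1 - x)).
Proof.
  intros H0 H1; unfold Fquot; destruct Req_EM_T; [lra|]; destruct Req_EM_T; [lra|]; auto.
Qed.

Lemma Fquot_pos x : 0 <= x <= 1 -> 0 < Fquot F F' x.
Proof.
  intros Hx; unfold Fquot.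
  destruct Req_EM_T; [apply HA|]; destruct Req_EM_T; [pose proof (adm_slope_1 _ _ HA); lra|].
  apply Rdiv_lt_0_compat; [apply HA; lra | nra].
Qed.

(* At the endpoints Fquot is a difference quotient of F at a zero of F. *)
Lemma Fquot_continuity_0 : continuity_pt (Fquot F F') 0.
Proof.
  apply continuity_pt_intro. intros eps Heps.
  destruct (slope_quotient_limit F 0 (F' 0) 1 (adm_deriv _ _ HA 0 ltac:(lra))
    ltac:(rewrite Rabs_R1; lra) eps Heps) as [d [Hd H]].
  exists (Rmin d 1); split; [apply Rmin_pos; lra|].
  intros y Hy. rewrite Rminus_0_r in Hy.
  pose proof (Rmin_l d 1). pose proof (Rmin_r d 1).
  destruct (Req_dec y 0) as [->|Hy0]; [rewrite Rminus_diag, Rabs_R0; lra|].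
  assert (Hy' := Rabs_def2 _ _ Hy).
  rewrite Fquot_generic by (auto; lra).
  unfold Fquot at 1; destruct Req_EM_T; [|lra].
  specialize (H y Hy0 ltac:(lra)). rewrite Rplus_0_l, (adm_zero_0 _ _ HA) in H.
  replace (F y / (y * (1 - y))) with ((F y - 0) / y / (1 - 1 * y))
    by (field; repeat split; auto; lra).
  exact H.
Qed.

Lemma Fquot_continuity_1 : continuity_pt (Fquot F F') 1.
Proof.
  apply continuity_pt_intro. intros eps Heps.
  destruct (slope_quotient_limit F 1 (F' 1) (-1) (adm_deriv _ _ HA 1 ltac:(lra))
    ltac:(rewrite Rabs_m1; lra) eps Heps) as [d [Hd H]].
  exists (Rmin d 1); split; [apply Rmin_pos; lra|].
  intros y Hy. pose proof (Rmin_l d 1). pose proof (Rmin_r d 1).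
  destruct (Req_dec y 1) as [->|Hy1]; [rewrite Rminus_diag, Rabs_R0; lra|].
  assert (Hy' := Rabs_def2 _ _ Hy).
  rewrite Fquot_generic by (auto; lra).
  unfold Fquot at 1; destruct Req_EM_T; [lra|]; destruct Req_EM_T; [|lra].
  specialize (H (y - 1) ltac:(lra) ltac:(lra)).
  replace (1 + (y - 1)) with y in H by ring. rewrite (adm_zero_1 _ _ HA) in H.
  replace (F y / (y * (1 - y)) - - F' 1)
    with (- ((F y - 0) / (y - 1) / (1 - -1 * (y - 1)) - F' 1))
    by (field; repeat split; auto; lra).
  rewrite Rabs_Ropp. exact H.
Qed.

Lemma Fquot_continuity x : 0 <= x <= 1 -> continuity_pt (Fquot F F') x.
Proof.
  intros Hx.
  destruct (Req_dec x 0) as [->|H0]; [apply Fquot_continuity_0|].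
  destruct (Req_dec x 1) as [->|H1]; [apply Fquot_continuity_1|].
  apply continuity_pt_filterlim.
  apply continuous_ext_loc with (fun y => F y / (y * (1 - y))).
  - apply locally_interval with (Finite 0) (Finite 1); simpl; try lra.
    intros y Hy0 Hy1. symmetry. apply Fquot_generic; lra.
  - apply continuity_pt_filterlim, continuity_pt_div.
    + apply derivable_pt_lim_continuity with (F' x), HA; lra.
    + apply continuity_pt_mult; [apply continuity_pt_id|].
      apply continuity_pt_minus; [apply continuity_pt_const; intros ? ?; auto|apply continuity_pt_id].
    + apply Rmult_integral_contrapositive; split; lra.
Qed.

Lemma Psi_continuous th : continuous (Psi F F') th.
Proof.
  unfold Psi. apply (continuous_mult (fun _ => 2) (fun th => / sqrt (Fquot F F' (sin th ^ 2)))).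
  { apply continuous_const. }
  apply continuous_Rinv_comp.
  2:{ apply Rgt_not_eq, sqrt_lt_R0, Fquot_pos, sin2_in. }
  apply continuous_sqrt_comp.
  apply (continuous_comp (fun th => sin th ^ 2) (Fquot F F')).
  - apply (ex_derive_continuous (K := R_AbsRing) (V := R_NormedModule)). auto_derive. auto.
  - apply continuity_pt_filterlim, Fquot_continuity, sin2_in.
Qed.

Lemma Psi_pos th : 0 < Psi F F' th.
Proof.
  unfold Psi. apply Rmult_lt_0_compat; [lra|].
  apply Rinv_0_lt_compat, sqrt_lt_R0, Fquot_pos, sin2_in.
Qed.

Lemma Phi_derivative th : is_derive (Phi F F') th (- Psi F F' th).
Proof.
  apply (is_derive_RInt' (Psi F F') (Phi F F') th (PI / 2)).
  - exists (mkposreal 1 Rlt_0_1). intros a _. unfold Phi.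
    apply (RInt_correct (V := R_CompleteNormedModule)).
    apply (ex_RInt_continuous (V := R_CompleteNormedModule)). intros; apply Psi_continuous.
  - apply Psi_continuous.
Qed.

Lemma Phi_continuity th : continuity_pt (Phi F F') th.
Proof.
  apply derivable_pt_lim_continuity with (- Psi F F' th).
  apply is_derive_Reals, Phi_derivative.
Qed.

Lemma Phi_decreasing th1 th2 : th1 < th2 -> Phi F F' th2 < Phi F F' th1.
Proof.
  intros Hth.
  destruct (MVT_gen (Phi F F') th1 th2 (fun th => - Psi F F' th)) as [c [_ E]].
  - intros; apply Phi_derivative.
  - intros; apply Phi_continuity.
  - pose proof (Psi_pos c). nra.
Qed.

Lemma Zf_continuity x : 0 <= x <= 1 -> continuity_pt (Zf F F') x.
Proof.
  intros Hx. unfold Zf.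
  apply (continuity_pt_comp (fun x => asin (sqrt x)) (Phi F F')); [|apply Phi_continuity].
  apply (continuity_pt_comp sqrt asin); [apply continuity_pt_sqrt; lra|].
  apply asin_continuity. split; [apply sqrt_pos|].
  rewrite <- sqrt_1. apply sqrt_le_1_alt; lra.
Qed.

Lemma Zf_1 : Zf F F' 1 = 0.
Proof.
  unfold Zf, Phi. rewrite sqrt_1, asin_1.
  apply (RInt_point (V := R_CompleteNormedModule)).
Qed.

Lemma Zf_decreasing x1 x2 : 0 <= x1 < x2 -> x2 <= 1 -> Zf F F' x2 < Zf F F' x1.
Proof.
  intros H1 H2. apply Phi_decreasing, asin_increasing.
  - split; [apply sqrt_pos | apply sqrt_lt_1_alt; lra].
  - rewrite <- sqrt_1. apply sqrt_le_1_alt; lra.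
Qed.

Lemma Zf_0_pos : 0 < Zf F F' 0.
Proof. rewrite <- Zf_1 at 1. apply Zf_decreasing; lra. Qed.

(* The chain rule through x |-> asin (sqrt x) undoes the substitution. *)
Lemma Zf_derivative x : 0 < x < 1 -> derivable_pt_lim (Zf F F') x (- / sqrt (F x)).
Proof.
  intros Hx.
  assert (Hs : 0 < sqrt x < 1).
  { split; [apply sqrt_lt_R0; lra|]. rewrite <- sqrt_1. apply sqrt_lt_1_alt; lra. }
  assert (H1 := derivable_pt_lim_sqrt x ltac:(lra)).
  assert (H2 := asin_derivative (sqrt x) ltac:(lra)).
  assert (H3 := proj1 (is_derive_Reals _ _ _) (Phi_derivative (asin (sqrt x)))).
  assert (H := derivable_pt_lim_comp _ _ _ _ _ (derivable_pt_lim_comp _ _ _ _ _ H1 H2) H3).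
  unfold Zf. unfold comp in H.
  replace (- / sqrt (F x)) with
    (- Psi F F' (asin (sqrt x)) * (1 / sqrt (1 - (sqrt x)²) * / (2 * sqrt x))); [exact H|].
  unfold Psi. rewrite sin_asin by lra.
  rewrite pow2_sqrt, Rsqr_sqrt, Fquot_generic by lra.
  assert (HFx : 0 < F x) by (apply HA; lra).
  rewrite sqrt_div_alt, sqrt_mult by nra.
  assert (0 < sqrt (F x)) by (apply sqrt_lt_R0; lra).
  assert (0 < sqrt (1 - x)) by (apply sqrt_lt_R0; lra).
  field. repeat split; lra.
Qed.

Lemma Zf_integral a b : 0 < a -> a <= b -> b < 1 ->
  is_RInt (fun y => / sqrt (F y)) a b (Zf F F' a - Zf F F' b).
Proof.
  intros Ha Hab Hb.
  replace (Zf F F' a - Zf F F' b) with (minus (- Zf F F' b) (- Zf F F' a))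
    by (unfold minus, plus, opp; simpl; ring).
  apply (is_RInt_derive (fun y => - Zf F F' y)); intros x Hx;
    rewrite Rmin_left, Rmax_right in Hx by lra.
  - apply is_derive_Reals.
    replace (/ sqrt (F x)) with (- (- / sqrt (F x))) by ring.
    apply (derivable_pt_lim_opp (Zf F F')). apply Zf_derivative; lra.
  - apply continuous_Rinv_comp.
    + apply continuous_sqrt_comp, continuity_pt_filterlim.
      apply derivable_pt_lim_continuity with (F' x), HA; lra.
    + apply Rgt_not_eq, sqrt_lt_R0, HA; lra.
Qed.

Lemma Zf_improper x : 0 <= x < 1 ->
  improper_integral (fun y => / sqrt (F y)) x 1 (Zf F F' x).
Proof.
  intros Hx eps Heps.
  destruct (continuity_pt_elim _ _ (Zf_continuity x ltac:(lra)) (eps / 2) ltac:(lra))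
    as [d1 [Hd1 H1]].
  destruct (continuity_pt_elim _ _ (Zf_continuity 1 ltac:(lra)) (eps / 2) ltac:(lra))
    as [d2 [Hd2 H2]].
  exists (Rmin d1 d2); split; [apply Rmin_pos; auto|].
  intros a' b' Ha Hb Hab.
  pose proof (Rmin_l d1 d2). pose proof (Rmin_r d1 d2).
  assert (HI := Zf_integral a' b' ltac:(lra) Hab ltac:(lra)).
  exists (ex_RInt_Reals_0 _ _ _ (ex_intro _ _ HI)).
  rewrite <- RInt_Reals, (is_RInt_unique _ _ _ _ HI).
  specialize (H1 a' ltac:(apply Rabs_def1; lra)).
  specialize (H2 b' ltac:(apply Rabs_def1; lra)).
  rewrite Zf_1, Rminus_0_r in H2.
  apply Rabs_def2 in H1, H2. apply Rabs_def1; lra.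
Qed.

End Admissible.

Lemma improper_integral_unique f x l1 l2 : x < 1 ->
  improper_integral f x 1 l1 -> improper_integral f x 1 l2 -> l1 = l2.
Proof.
  intros Hx H1 H2.
  destruct (Req_dec l1 l2) as [E|Hne]; auto. exfalso.
  set (e := Rabs (l1 - l2) / 2).
  assert (He : 0 < e) by (apply Rdiv_lt_0_compat; [apply Rabs_pos_lt; lra | lra]).
  destruct (H1 e He) as [d1 [Hd1 K1]]. destruct (H2 e He) as [d2 [Hd2 K2]].
  set (d := Rmin (Rmin d1 d2) (1 - x)).
  assert (Hd : 0 < d) by (repeat apply Rmin_pos; lra).
  pose proof (Rmin_l (Rmin d1 d2) (1 - x)). pose proof (Rmin_r (Rmin d1 d2) (1 - x)).
  pose proof (Rmin_l d1 d2). pose proof (Rmin_r d1 d2). fold d in H, H0.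
  destruct (K1 (x + d / 3) (1 - d / 3)) as [p1 Q1]; try split; try lra.
  destruct (K2 (x + d / 3) (1 - d / 3)) as [p2 Q2]; try split; try lra.
  rewrite (RiemannInt_P5 p1 p2) in Q1.
  apply Rabs_def2 in Q1, Q2. unfold e in *. revert Q1 Q2. unfold Rabs; destruct Rcase_abs; lra.
Qed.

Lemma zeta_eq_Zf F F' n t : admissible F F' ->
  (forall y, Rprof n y t = sqrt (F y)) ->
  forall x, 0 <= x <= 1 -> zeta n x t = Zf F F' x.
Proof.
  intros HA HR x Hx. unfold zeta. destruct Rlt_dec as [Hlt|Hge].
  - replace (fun y => / Rprof n y t) with (fun y => / sqrt (F y))
      by (apply functional_extensionality; intros y; rewrite HR; auto).
    apply (improper_integral_unique (fun y => / sqrt (F y)) x); auto.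
    + apply (epsilon_spec (inhabits 0)
        (fun l => improper_integral (fun y => / sqrt (F y)) x 1 l)).
      exists (Zf F F' x). apply Zf_improper; auto; lra.
    + apply Zf_improper; auto; lra.
  - replace x with 1 by lra. rewrite Zf_1; auto.
Qed.

Lemma continuous_onto (Z : R -> R) : (forall x, 0 <= x <= 1 -> continuity_pt Z x) ->
  Z 1 = 0 -> 0 <= Z 0 -> forall s, 0 <= s <= Z 0 -> exists x, 0 <= x <= 1 /\ Z x = s.
Proof.
  intros Zc Z1 HZ0 s Hs.
  assert (Hc : continuity (fun y => Z (clamp 0 1 y))).
  { intros y. apply continuity_clamp; [lra|]. intros; apply cont_within_of_continuity, Zc; auto. }
  destruct (IVT_gen _ 0 1 s Hc) as [x [Hx E]].
  - rewrite !clamp_id by lra. rewrite Z1, Rmin_right, Rmax_left; lra.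
  - rewrite Rmin_left, Rmax_right in Hx by lra. rewrite clamp_id in E by lra.
    exists x; split; auto.
Qed.

Lemma inverse_estimate D q e1 eps : D < 0 -> 0 < eps -> e1 <= - D / 2 ->
  e1 <= eps * D ^ 2 / 2 -> Rabs (q - D) < e1 -> Rabs (/ q - / D) < eps.
Proof.
  intros HD He H1 H2 Hq. apply Rabs_def2 in Hq.
  assert (Hq0 : q < D / 2) by lra.
  assert (HqD : D ^ 2 / 2 < q * D) by nra.
  replace (/ q - / D) with ((D - q) * / (q * D)) by (field; split; lra).
  assert (0 < / (q * D)) by (apply Rinv_0_lt_compat; nra).
  rewrite Rabs_mult, (Rabs_right (/ (q * D))) by lra.
  assert (Rabs (D - q) < e1) by (apply Rabs_def1; lra).
  assert (/ (q * D) < 2 / D ^ 2).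
  { apply Rmult_lt_reg_r with (q * D * D ^ 2); [nra|]. field_simplify; try nra. }
  pose proof (Rabs_pos (D - q)).
  apply Rlt_le_trans with (e1 * (2 / D ^ 2)); [apply Rmult_le_0_lt_compat; lra|].
  apply Rmult_le_reg_r with (D ^ 2); [nra|]. field_simplify; try nra.
Qed.

Section Inverse.
Variables (Z X : R -> R) (P : R).
Hypothesis Zdec : forall x1 x2, 0 <= x1 < x2 -> x2 <= 1 -> Z x2 < Z x1.
Hypothesis Z1 : Z 1 = 0.
Hypothesis HP : P = Z 0.
Hypothesis HX : forall s, 0 <= s <= P -> 0 <= X s <= 1 /\ Z (X s) = s.

Lemma Z_le x1 x2 : 0 <= x1 <= x2 -> x2 <= 1 -> Z x2 <= Z x1.
Proof.
  intros. destruct (Req_dec x1 x2) as [->|]; [lra|]. apply Rlt_le, Zdec; lra.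
Qed.

Lemma X_Z x : 0 <= x <= 1 -> X (Z x) = x.
Proof.
  intros Hx.
  assert (Hr : 0 <= Z x <= P) by (rewrite HP, <- Z1 at 1; split; apply Z_le; lra).
  destruct (HX (Z x) Hr) as [H1 H2].
  destruct (Rtotal_order (X (Z x)) x) as [Hl|[He|Hg]]; auto.
  - pose proof (Zdec (X (Z x)) x ltac:(lra) ltac:(lra)). lra.
  - pose proof (Zdec x (X (Z x)) ltac:(lra) ltac:(lra)). lra.
Qed.

Lemma X_0 : X 0 = 1.
Proof. rewrite <- Z1. apply X_Z; lra. Qed.

Lemma X_P : X P = 0.
Proof. rewrite HP. apply X_Z; lra. Qed.

Lemma X_interior s : 0 < s < P -> 0 < X s < 1.
Proof.
  intros Hs. destruct (HX s ltac:(lra)) as [H1 H2]. split.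
  - destruct (Req_dec (X s) 0) as [E|E]; [rewrite E, <- HP in H2; lra | lra].
  - destruct (Req_dec (X s) 1) as [E|E]; [rewrite E, Z1 in H2; lra | lra].
Qed.

(* Continuity of a monotone inverse: to move X by less than e, it suffices
   to move s by less than the gaps Z(x0 -+ e) - s0. *)
Lemma X_cont_within s0 : 0 <= s0 <= P -> cont_within 0 P X s0.
Proof.
  intros Hs0 eps Heps.
  destruct (HX s0 Hs0) as [Hx0 E0].
  set (x0 := X s0) in *. set (e := eps / 2).
  assert (He : 0 < e) by (unfold e; lra).
  assert (Hd1 : exists d1, 0 < d1 /\ (x0 + e <= 1 -> d1 = s0 - Z (x0 + e))).
  { destruct (Rle_dec (x0 + e) 1).
    - exists (s0 - Z (x0 + e)). split; auto. rewrite <- E0.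
      pose proof (Zdec x0 (x0 + e) ltac:(lra) r). lra.
    - exists 1. split; [lra|]. intros; lra. }
  assert (Hd2 : exists d2, 0 < d2 /\ (0 <= x0 - e -> d2 = Z (x0 - e) - s0)).
  { destruct (Rle_dec 0 (x0 - e)).
    - exists (Z (x0 - e) - s0). split; auto. rewrite <- E0.
      pose proof (Zdec (x0 - e) x0 ltac:(lra) ltac:(lra)). lra.
    - exists 1. split; [lra|]. intros; lra. }
  destruct Hd1 as [d1 [Hd1 Ed1]]. destruct Hd2 as [d2 [Hd2 Ed2]].
  exists (Rmin d1 d2). split; [apply Rmin_pos; auto|].
  intros s Hs Hss. pose proof (Rmin_l d1 d2). pose proof (Rmin_r d1 d2).
  apply Rabs_def2 in Hss. destruct (HX s Hs) as [Hx E].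
  assert (A1 : X s < x0 + e).
  { destruct (Rlt_dec (X s) (x0 + e)) as [|Hn]; auto. exfalso.
    destruct (Rle_dec (x0 + e) 1) as [Hr|Hr]; [|lra].
    pose proof (Z_le (x0 + e) (X s) ltac:(lra) ltac:(lra)).
    specialize (Ed1 Hr). lra. }
  assert (A2 : x0 - e < X s).
  { destruct (Rlt_dec (x0 - e) (X s)) as [|Hn]; auto. exfalso.
    destruct (Rle_dec 0 (x0 - e)) as [Hr|Hr]; [|lra].
    pose proof (Z_le (X s) (x0 - e) ltac:(lra) ltac:(lra)).
    specialize (Ed2 Hr). lra. }
  apply Rabs_def1; unfold e in *; lra.
Qed.

Lemma X_derivative s Dz : 0 < s < P -> derivable_pt_lim Z (X s) Dz -> Dz < 0 ->
  derivable_pt_lim X s (/ Dz).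
Proof.
  intros Hs HZ HD eps Heps.
  set (e1 := Rmin (- Dz / 2) (eps * Dz ^ 2 / 2)).
  assert (He1 : 0 < e1).
  { apply Rmin_pos; [lra|]. apply Rmult_lt_0_compat; [|lra].
    apply Rmult_lt_0_compat; nra. }
  destruct (HZ e1 He1) as [d1 Hd1].
  destruct (X_cont_within s ltac:(lra) d1 (cond_pos d1)) as [d2 [Hd2 Hc]].
  assert (Hd : 0 < Rmin d2 (Rmin s (P - s))) by (repeat apply Rmin_pos; lra).
  exists (mkposreal _ Hd). intros h Hh0 Hh. simpl in Hh.
  pose proof (Rmin_l d2 (Rmin s (P - s))). pose proof (Rmin_r d2 (Rmin s (P - s))).
  pose proof (Rmin_l s (P - s)). pose proof (Rmin_r s (P - s)).
  pose proof (Rabs_def2 _ _ Hh) as Hh'.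
  destruct (HX (s + h) ltac:(lra)) as [_ Eh].
  destruct (HX s ltac:(lra)) as [_ Es].
  set (k := X (s + h) - X s).
  assert (Hk0 : k <> 0).
  { intros E. unfold k in E. replace (X (s + h)) with (X s) in Eh by lra. lra. }
  assert (Hk : Rabs k < d1) by (apply Hc; [lra | replace (s + h - s) with h by ring; lra]).
  specialize (Hd1 k Hk0 Hk).
  replace (X s + k) with (X (s + h)) in Hd1 by (unfold k; ring).
  rewrite Eh, Es in Hd1.
  replace (k / h) with (/ ((s + h - s) / k)) by (field; split; auto).
  apply (inverse_estimate Dz _ e1); auto; [apply Rmin_l | apply Rmin_r].
Qed.

End Inverse.

Definition profile (X : R -> R) (a k z : R) : R := (1 - a * X (k * z)) / k.
Definition profile_slope (F X : R -> R) (a k z : R) : R := a * sqrt (F (X (k * z))).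
Definition profile_bend (F' X : R -> R) (a k z : R) : R := - a * k * F' (X (k * z)) / 2.

Lemma dilate_range k P z : 0 < k -> 0 <= z <= P / k -> 0 <= k * z <= P.
Proof.
  intros Hk [H1 H2]. apply (Rmult_le_compat_l k) in H2; [|lra].
  field_simplify in H2; [nra | lra].
Qed.

Lemma dilate_range_strict k P z : 0 < k -> 0 < z < P / k -> 0 < k * z < P.
Proof.
  intros Hk [H1 H2]. apply (Rmult_lt_compat_l k) in H2; [|lra].
  field_simplify in H2; [nra | lra].
Qed.

Section Profile.
Variables (F F' X : R -> R) (P a k : R).
Hypothesis HA : admissible F F'.
Hypothesis HF'c : forall x, 0 <= x <= 1 -> continuity_pt F' x.
Hypothesis HP : P = Zf F F' 0.
Hypothesis HX : forall s, 0 <= s <= P -> 0 <= X s <= 1 /\ Zf F F' (X s) = s.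
Hypothesis Hk : 0 < k.

Let Zdec := Zf_decreasing F F' HA.

Lemma P_pos : 0 < P.
Proof. rewrite HP. apply Zf_0_pos; auto. Qed.

Lemma X_range z : 0 <= z <= P / k -> 0 <= X (k * z) <= 1.
Proof. intros Hz. apply HX, dilate_range; auto. Qed.

(* X' = -sqrt(F o X): the inverse of Zf' = -F^(-1/2). *)
Lemma X_derivative_sqrt s : 0 < s < P -> derivable_pt_lim X s (- sqrt (F (X s))).
Proof.
  intros Hs. destruct (X_interior _ X P (Zf_1 F F') HP HX s Hs) as [H1 H2].
  assert (0 < sqrt (F (X s))) by (apply sqrt_lt_R0, HA; lra).
  replace (- sqrt (F (X s))) with (/ (- / sqrt (F (X s)))) by (field; lra).
  apply (X_derivative (Zf F F') X P Zdec HX s); [auto | apply Zf_derivative; auto; lra |].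
  assert (0 < / sqrt (F (X s))) by (apply Rinv_0_lt_compat; lra). lra.
Qed.

Lemma Xk_cont_within z : 0 <= z <= P / k -> cont_within 0 (P / k) (fun w => X (k * w)) z.
Proof.
  intros Hz. replace 0 with (0 / k) at 1 by (field; lra).
  apply cont_within_dilate; auto.
  apply (X_cont_within (Zf F F') X P Zdec HX), dilate_range; auto.
Qed.

Lemma Xk_derivative z : 0 < z < P / k ->
  derivable_pt_lim (fun w => X (k * w)) z (- sqrt (F (X (k * z))) * k).
Proof.
  intros Hz. apply (derivable_pt_lim_comp (fun w => k * w) X z k).
  - apply is_derive_Reals. auto_derive; auto. ring.
  - apply X_derivative_sqrt, dilate_range_strict; auto.
Qed.

Lemma slope_cont_within z : 0 <= z <= P / k ->
  cont_within 0 (P / k) (profile_slope F X a k) z.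
Proof.
  intros Hz. apply (cont_within_comp 0 (P / k) (fun w => X (k * w)) (fun y => a * sqrt (F y))).
  - apply Xk_cont_within; auto.
  - destruct (X_range z Hz).
    apply (continuity_pt_scal (fun y => sqrt (F y))), (continuity_pt_comp F sqrt).
    + apply derivable_pt_lim_continuity with (F' (X (k * z))), HA; auto.
    + apply continuity_pt_sqrt, (admissible_nonneg F F'); auto.
Qed.

Lemma profile_deriv_within z : 0 <= z <= P / k ->
  deriv_within 0 (P / k) (profile X a k) (profile_slope F X a k z) z.
Proof.
  pose proof P_pos as HPpos.
  apply deriv_within_of_interior.
  - apply Rdiv_lt_0_compat; auto.
  - intros w Hw. apply (cont_within_comp 0 (P / k) (fun w => X (k * w)) (fun y => (1 - a * y) / k)).
    + apply Xk_cont_within; auto.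
    + apply derivable_pt_lim_continuity with (- a / k).
      apply is_derive_Reals. auto_derive; [lra | field; lra].
  - intros w Hw. unfold profile, profile_slope.
    replace (a * sqrt (F (X (k * w)))) with ((- a / k) * (- sqrt (F (X (k * w))) * k))
      by (field; lra).
    apply (derivable_pt_lim_comp (fun w => X (k * w)) (fun y => (1 - a * y) / k)).
    + apply Xk_derivative; auto.
    + apply is_derive_Reals. auto_derive; [lra | field; lra].
  - apply slope_cont_within.
Qed.

Lemma slope_deriv_within z : 0 <= z <= P / k ->
  deriv_within 0 (P / k) (profile_slope F X a k) (profile_bend F' X a k z) z.
Proof.
  pose proof P_pos as HPpos.
  apply deriv_within_of_interior.
  - apply Rdiv_lt_0_compat; auto.
  - intros w Hw. apply slope_cont_within; auto.
  - intros w Hw. unfold profile_slope, profile_bend.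
    destruct (X_interior _ X P (Zf_1 F F') HP HX (k * w)) as [H1 H2];
      [apply dilate_range_strict; auto|].
    set (x := X (k * w)) in *.
    assert (HFx : 0 < F x) by (apply HA; lra).
    assert (Hsq : 0 < sqrt (F x)) by (apply sqrt_lt_R0; auto).
    replace (- a * k * F' x / 2)
      with ((a * (/ (2 * sqrt (F x)) * F' x)) * (- sqrt (F x) * k)) by (field; lra).
    apply (derivable_pt_lim_comp (fun w => X (k * w)) (fun y => a * sqrt (F y))).
    + apply Xk_derivative; auto.
    + apply (derivable_pt_lim_scal (fun y => sqrt (F y))), (derivable_pt_lim_comp F sqrt).
      * apply HA; lra.
      * apply derivable_pt_lim_sqrt; auto.
  - intros w Hw.
    apply (cont_within_comp 0 (P / k) (fun w => X (k * w)) (fun y => - a * k * F' y / 2)).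
    + apply Xk_cont_within; auto.
    + apply continuity_pt_filterlim, (continuous_comp F' (fun y => - a * k * y / 2)).
      * apply continuity_pt_filterlim, HF'c, X_range; auto.
      * apply (ex_derive_continuous (K := R_AbsRing) (V := R_NormedModule)). auto_derive. auto.
Qed.

Lemma slope_ends : profile_slope F X a k 0 = 0 /\ profile_slope F X a k (P / k) = 0.
Proof.
  unfold profile_slope. replace (k * (P / k)) with P by (field; lra).
  rewrite Rmult_0_r, (X_0 _ X P Zdec (Zf_1 F F') HP HX), (X_P _ X P Zdec (Zf_1 F F') HP HX).
  rewrite (adm_zero_0 _ _ HA), (adm_zero_1 _ _ HA), sqrt_0. split; ring.
Qed.

End Profile.

(* Polynomial inequalities behind the sign of the concrete F and of its
   slopes at the endpoints; t > 0, t <> 1 throughout. *)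
Lemma pow_sign t k : 0 < t -> t <> 1 -> 0 < (1 - t) * (1 - t ^ S k).
Proof.
  intros H0 H1. destruct (Rlt_dec t 1).
  - pose proof (pow_lt_1_compat t (S k) ltac:(lra) ltac:(lia)). nra.
  - pose proof (Rlt_pow_R1 t (S k) ltac:(lra) ltac:(lia)). nra.
Qed.

Lemma slope0_poly_pos t k : 0 < t -> t <> 1 ->
  0 < 1 - INR (S (S k)) * t ^ S k + INR (S k) * t ^ S (S k).
Proof.
  intros H0 H1. assert (Hsq : 0 < (1 - t) * (1 - t)) by (apply Rsqr_pos_lt; lra).
  induction k as [|k IH].
  - simpl. nra.
  - assert (0 <= (INR k + 2) * (t * t ^ k) * ((1 - t) * (1 - t))).
    { apply Rmult_le_pos; [|lra]. apply Rmult_le_pos;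
        [pose proof (pos_INR k); lra | apply Rlt_le, Rmult_lt_0_compat; [lra | apply pow_lt; lra]]. }
    rewrite !S_INR in *. simpl pow in *. nra.
Qed.

Lemma slope1_poly_pos t k : 0 < t -> t <> 1 ->
  0 < INR (S k) - INR (S (S k)) * t + t ^ S (S k).
Proof.
  intros H0 H1. induction k as [|k IH].
  - simpl. assert (0 < (1 - t) * (1 - t)) by (apply Rsqr_pos_lt; lra). nra.
  - pose proof (pow_sign t (S k) H0 H1).
    rewrite !S_INR in *. simpl pow in *. nra.
Qed.

Lemma unimodal_pos (h h' : R -> R) (lo hi cs : R) :
  0 < lo -> lo < hi -> (forall c, is_derive h c (h' c)) ->
  (forall c, 0 < c < cs -> 0 < h' c) -> (forall c, 0 < c <= cs -> 0 <= h' c) ->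
  (forall c, cs < c -> h' c < 0) ->
  h lo = 0 -> h hi = 0 -> forall y, lo < y < hi -> 0 < h y.
Proof.
  intros Hlo Hlh Hd Hp Hp' Hn Hl Hh y Hy.
  assert (M : forall a b, a < b -> exists c, a <= c <= b /\ h b - h a = h' c * (b - a)).
  { intros a b Hab. destruct (MVT_gen h a b h') as [c [Hc1 E]].
    - intros; apply Hd.
    - intros c _. apply derivable_pt_lim_continuity with (h' c), is_derive_Reals, Hd.
    - rewrite Rmin_left, Rmax_right in Hc1 by lra. exists c; auto. }
  destruct (Rle_dec y cs) as [Hy1|Hy1].
  - set (p := (lo + y) / 2).
    destruct (M lo p) as [c1 [Hc1 E1]]; [unfold p; lra|].
    destruct (M p y) as [c2 [Hc2 E2]]; [unfold p; lra|].
    assert (0 < h' c1) by (apply Hp; unfold p in *; lra).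
    assert (0 <= h' c2) by (apply Hp'; unfold p in *; lra).
    assert (0 < p - lo) by (unfold p; lra). assert (0 < y - p) by (unfold p; lra).
    nra.
  - set (q := (y + hi) / 2).
    destruct (M q hi) as [c1 [Hc1 E1]]; [unfold q; lra|].
    destruct (M y q) as [c2 [Hc2 E2]]; [unfold q; lra|].
    assert (h' c1 < 0) by (apply Hn; unfold q in *; lra).
    assert (h' c2 < 0) by (apply Hn; unfold q in *; lra).
    assert (0 < hi - q) by (unfold q; lra). assert (0 < q - y) by (unfold q; lra).
    nra.
Qed.

(* The concrete data for n = m + 2: with y = 1 - (1 - t) x,
   R(x;t) = sqrt(Rsq x), Rsq = (W^2 - 1) / (1 - t)^2, W = y^(n-1) / D,
   D = 1 - Q(t) + Q(t) y^n.  Wd and Rsq' are the x-derivatives. *)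
Definition yvar (t x : R) : R := 1 - (1 - t) * x.
Definition Qm (m : nat) (t : R) : R := Qf (S (S m)) t.
Definition Dden (m : nat) (t x : R) : R := 1 - Qm m t + Qm m t * yvar t x ^ S (S m).
Definition W (m : nat) (t x : R) : R := yvar t x ^ S m / Dden m t x.
Definition Rsq (m : nat) (t x : R) : R := (W m t x ^ 2 - 1) / (1 - t) ^ 2.
Definition Wd (m : nat) (t x : R) : R :=
  (INR (S m) * yvar t x ^ m * (- (1 - t)) * Dden m t x
   - yvar t x ^ S m * (Qm m t * INR (S (S m)) * yvar t x ^ S m * (- (1 - t))))
  / Dden m t x ^ 2.
Definition crossing (m : nat) (t c : R) : R :=
  c ^ S m - (1 - Qm m t + Qm m t * c ^ S (S m)).
Definition Rsq' (m : nat) (t x : R) : R := 2 * W m t x * Wd m t x / (1 - t) ^ 2.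

Lemma yvar_pos t x : 0 < t -> 0 <= x <= 1 -> 0 < yvar t x.
Proof. intros; unfold yvar. nra. Qed.

Section Concrete.
Variables (m : nat) (t : R).
Hypothesis Ht : 0 < t.
Hypothesis Ht1 : t <> 1.

Lemma Qm_eq : Qm m t = (1 - t ^ S m) / (1 - t ^ S (S m)).
Proof.
  unfold Qm, Qf. destruct Req_EM_T; [contradiction|].
  replace (S (S m) - 1)%nat with (S m) by lia. reflexivity.
Qed.

Lemma one_minus_pow_ne k : 1 - t ^ S k <> 0.
Proof. pose proof (pow_sign t k Ht Ht1). intros E; rewrite E in H; lra. Qed.

Lemma Qm_bounds : 0 < Qm m t < 1.
Proof.
  rewrite Qm_eq. pose proof (pow_sign t m Ht Ht1). pose proof (pow_sign t (S m) Ht Ht1).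
  pose proof (one_minus_pow_ne (S m)).
  replace ((1 - t ^ S m) / (1 - t ^ S (S m)))
    with (((1 - t) * (1 - t ^ S m)) / ((1 - t) * (1 - t ^ S (S m)))) by (field; split; lra).
  split; [apply Rdiv_lt_0_compat; auto|].
  apply Rmult_lt_reg_r with ((1 - t) * (1 - t ^ S (S m))); auto.
  field_simplify; [|lra]. simpl pow.
  pose proof (pow_lt t m Ht).
  assert (0 < t * t ^ m * ((1 - t) * (1 - t))).
  { apply Rmult_lt_0_compat; [nra | apply Rsqr_pos_lt; lra]. }
  nra.
Qed.

Lemma Dden_pos x : 0 <= x <= 1 -> 0 < Dden m t x.
Proof.
  intros Hx. unfold Dden. pose proof Qm_bounds.
  pose proof (pow_lt _ (S (S m)) (yvar_pos t x Ht Hx)). nra.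
Qed.

Lemma W_pos x : 0 <= x <= 1 -> 0 < W m t x.
Proof.
  intros Hx. apply Rdiv_lt_0_compat; [apply pow_lt, yvar_pos | apply Dden_pos]; auto.
Qed.

Lemma Rsq_derivative x : 0 <= x <= 1 -> derivable_pt_lim (Rsq m t) x (Rsq' m t x).
Proof.
  intros Hx. apply is_derive_Reals. pose proof (Dden_pos x Hx) as HD.
  assert (Ha : 1 - t <> 0) by lra.
  unfold Rsq, Rsq', Wd, W. unfold Dden, yvar in *. simpl pow in HD. auto_derive.
  - replace (1 + - ((1 - t) * x)) with (1 - (1 - t) * x) by ring. lra.
  - change (match m with 0%nat => 1 | S _ => INR m + 1 end) with (INR (S m)).
    change (match m with 0%nat => 1 | S _ => INR m + 1 end + 1) with (INR (S (S m))).
    simpl pow. replace (1 + - ((1 - t) * x)) with (1 - (1 - t) * x) by ring.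
    rewrite (S_INR (S m)). field. split; lra.
Qed.

Lemma Rsq'_continuity x : 0 <= x <= 1 -> continuity_pt (Rsq' m t) x.
Proof.
  intros Hx. pose proof (Dden_pos x Hx) as HD. assert (Ha : 1 - t <> 0) by lra.
  apply continuity_pt_filterlim.
  apply (ex_derive_continuous (K := R_AbsRing) (V := R_NormedModule)).
  unfold Rsq', Wd, W. unfold Dden, yvar in *. simpl pow in HD.
  auto_derive; replace (1 + - ((1 - t) * x)) with (1 - (1 - t) * x) by ring;
    repeat split; try lra; rewrite Rmult_1_r; apply Rmult_integral_contrapositive; split; lra.
Qed.

Lemma Dden_1 : Dden m t 1 = t ^ S m.
Proof.
  unfold Dden, yvar. rewrite Qm_eq. pose proof (one_minus_pow_ne (S m)).
  replace (1 - (1 - t) * 1) with t by ring. field; auto.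
Qed.

Lemma W_0 : W m t 0 = 1.
Proof.
  unfold W, Dden, yvar. rewrite Rmult_0_r, Rminus_0_r, !pow1.
  replace (1 - Qm m t + Qm m t * 1) with 1 by ring. field.
Qed.

Lemma W_1 : W m t 1 = 1.
Proof.
  unfold W. rewrite Dden_1. unfold yvar. replace (1 - (1 - t) * 1) with t by ring.
  pose proof (pow_lt t (S m) Ht). field; lra.
Qed.

Lemma Rsq'_0 : 0 < Rsq' m t 0.
Proof.
  pose proof (slope0_poly_pos t m Ht Ht1).
  replace (Rsq' m t 0) with (2 * (1 - INR (S (S m)) * t ^ S m + INR (S m) * t ^ S (S m))
     / ((1 - t) * (1 - t ^ S (S m)))).
  - apply Rdiv_lt_0_compat; [lra | apply pow_sign; auto].
  - unfold Rsq', Wd. rewrite W_0. unfold Dden, yvar.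
    rewrite Rmult_0_r, Rminus_0_r, !pow1, Qm_eq, (S_INR (S m)).
    pose proof (one_minus_pow_ne (S m)). field. split; lra.
Qed.

Lemma Rsq'_1 : Rsq' m t 1 < 0.
Proof.
  pose proof (slope1_poly_pos t m Ht Ht1).
  replace (Rsq' m t 1) with (- (2 * (INR (S m) - INR (S (S m)) * t + t ^ S (S m))
     / (t * ((1 - t) * (1 - t ^ S (S m)))))).
  - apply Ropp_lt_gt_0_contravar, Rdiv_lt_0_compat; [lra|].
    apply Rmult_lt_0_compat; auto. apply pow_sign; auto.
  - unfold Rsq', Wd. rewrite W_1, Dden_1. unfold yvar.
    replace (1 - (1 - t) * 1) with t by ring. rewrite Qm_eq, (S_INR (S m)).
    pose proof (one_minus_pow_ne (S m)). pose proof (pow_lt t m Ht).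
    simpl pow in *. field. repeat split; lra.
Qed.

(* W > 1 inside (0,1) because crossing (yvar t x) > 0, where crossing
   vanishes at c = t and c = 1 and is unimodal on (0,+oo). *)
Lemma crossing_pos c : Rmin t 1 < c < Rmax t 1 -> 0 < crossing m t c.
Proof.
  intros Hc. pose proof Qm_bounds as HQ. unfold crossing. set (Q := Qm m t) in *.
  assert (HN1 : 0 < INR (S m)) by (apply lt_0_INR; lia).
  assert (HN2 : 0 < INR (S (S m))) by (apply lt_0_INR; lia).
  set (cs := INR (S m) / (Q * INR (S (S m)))).
  assert (Hcs : forall c, INR (S m) - Q * INR (S (S m)) * c = Q * INR (S (S m)) * (cs - c))
    by (intros c'; unfold cs; field; lra).
  assert (Ht0 : t ^ S m - (1 - Q + Q * t ^ S (S m)) = 0).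
  { pose proof Dden_1 as E. unfold Dden, yvar in E.
    replace (1 - (1 - t) * 1) with t in E by ring. fold Q in E. rewrite E. ring. }
  assert (H10 : 1 ^ S m - (1 - Q + Q * 1 ^ S (S m)) = 0) by (rewrite !pow1; ring).
  apply (unimodal_pos (fun c => c ^ S m - (1 - Q + Q * c ^ S (S m)))
    (fun c => c ^ m * (INR (S m) - Q * INR (S (S m)) * c)) (Rmin t 1) (Rmax t 1) cs);
    auto.
  - apply Rmin_pos; lra.
  - unfold Rmin, Rmax in *; destruct Rle_dec; lra.
  - intros c'. auto_derive; auto.
    change (match m with 0%nat => 1 | S _ => INR m + 1 end) with (INR (S m)).
    change (match m with 0%nat => 1 | S _ => INR m + 1 end + 1) with (INR (S (S m))).
    simpl pow. rewrite (S_INR (S m)). ring.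
  - intros c' Hc'. rewrite Hcs. pose proof (pow_lt c' m ltac:(lra)).
    apply Rmult_lt_0_compat; auto. apply Rmult_lt_0_compat; [nra | lra].
  - intros c' Hc'. rewrite Hcs. pose proof (pow_lt c' m ltac:(lra)).
    apply Rmult_le_pos; [lra|]. apply Rmult_le_pos; [nra | lra].
  - intros c' Hc'. rewrite Hcs.
    assert (0 < cs) by (apply Rdiv_lt_0_compat; nra).
    pose proof (pow_lt c' m ltac:(lra)).
    assert (0 < Q * INR (S (S m)) * (c' - cs)) by (apply Rmult_lt_0_compat; nra).
    nra.
  - unfold Rmin; destruct Rle_dec; auto.
  - unfold Rmax; destruct Rle_dec; auto.
Qed.

Lemma W_gt_1 x : 0 < x < 1 -> 1 < W m t x.
Proof.
  intros Hx.
  assert (Hy : 0 < crossing m t (yvar t x))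
    by (apply crossing_pos; unfold yvar, Rmin, Rmax; destruct Rle_dec; nra).
  assert (HD := Dden_pos x ltac:(lra)).
  unfold W. apply Rmult_lt_reg_r with (Dden m t x); auto.
  field_simplify; [|lra]. unfold crossing, Dden in *. lra.
Qed.

Lemma Rsq_admissible : admissible (Rsq m t) (Rsq' m t).
Proof.
  assert (Hsq : 0 < (1 - t) ^ 2) by (rewrite <- Rsqr_pow2; apply Rsqr_pos_lt; lra).
  split.
  - apply Rsq_derivative.
  - unfold Rsq. rewrite W_0. field. lra.
  - unfold Rsq. rewrite W_1. field. lra.
  - apply Rsq'_0.
  - apply Rsq'_1.
  - intros x Hx. pose proof (W_gt_1 x Hx). apply Rdiv_lt_0_compat; nra.
Qed.

Lemma Rprof_Rsq x : Rprof (S (S m)) x t = sqrt (Rsq m t x).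
Proof.
  unfold Rprof. destruct Req_EM_T; [contradiction|].
  replace (S (S m) - 1)%nat with (S m) by lia.
  unfold Rsq, W, Dden, yvar, Qm.
  assert (0 < (1 - t) ^ 2) by (rewrite <- Rsqr_pow2; apply Rsqr_pos_lt; lra).
  rewrite sqrt_div_alt by auto.
  rewrite <- (Rsqr_pow2 (1 - t)), sqrt_Rsqr_abs. unfold Rdiv. ring.
Qed.

(* The ODE satisfied by Rsq, in the form used for the mean curvature:
   with u = y / k, u' = (1 - t) sqrt(Rsq), u'' = -(1 - t) k Rsq' / 2 one has
   1 + u'^2 = W^2 and H = n Q(t) k. *)
Lemma Rsq_curvature k x : 0 < k -> 0 <= x <= 1 ->
  Hcurv (S (S m)) (yvar t x / k) ((1 - t) * sqrt (Rsq m t x))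
    (- (1 - t) * k * Rsq' m t x / 2) = INR (S (S m)) * Qm m t * k.
Proof.
  intros Hk Hx.
  pose proof (W_pos x Hx). pose proof (Dden_pos x Hx). pose proof (yvar_pos t x Ht Hx).
  assert (HR : 0 <= Rsq m t x) by (apply (admissible_nonneg _ _ x Rsq_admissible Hx)).
  assert (E : 1 + ((1 - t) * sqrt (Rsq m t x)) ^ 2 = W m t x ^ 2).
  { rewrite Rpow_mult_distr, pow2_sqrt by auto. unfold Rsq. field. lra. }
  unfold Hcurv. rewrite E, sqrt_pow2 by lra.
  replace (S (S m) - 1)%nat with (S m) by lia.
  unfold Rsq', Wd. unfold W, Dden in *.
  set (Q := Qm m t) in *. set (y := yvar t x) in *.
  pose proof (pow_lt y m ltac:(lra)).
  simpl pow in *. rewrite (S_INR (S m)). field. repeat split; lra.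
Qed.

End Concrete.

Definition Rsq_one (m : nat) (x : R) : R := INR (S m) * (1 - x) * x.
Definition Rsq_one' (m : nat) (x : R) : R := INR (S m) * (1 - 2 * x).

Definition Fsq (m : nat) (t : R) : R -> R :=
  if Req_EM_T t 1 then Rsq_one m else Rsq m t.
Definition Fsq' (m : nat) (t : R) : R -> R :=
  if Req_EM_T t 1 then Rsq_one' m else Rsq' m t.

Lemma Fsq_admissible m t : 0 < t -> admissible (Fsq m t) (Fsq' m t).
Proof.
  intros Ht. unfold Fsq, Fsq'. destruct Req_EM_T as [E|E]; [|apply Rsq_admissible; auto].
  assert (0 < INR (S m)) by (apply lt_0_INR; lia).
  split; unfold Rsq_one, Rsq_one'; try ring; try lra.
  - intros x _. apply is_derive_Reals. auto_derive; auto.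
    change (match m with 0%nat => 1 | S _ => INR m + 1 end) with (INR (S m)). ring.
  - intros x Hx. apply Rmult_lt_0_compat; [apply Rmult_lt_0_compat|]; lra.
Qed.

Lemma Fsq'_continuity m t x : 0 < t -> 0 <= x <= 1 -> continuity_pt (Fsq' m t) x.
Proof.
  intros Ht Hx. unfold Fsq'. destruct Req_EM_T; [|apply Rsq'_continuity; auto].
  apply derivable_pt_lim_continuity with (- 2 * INR (S m)).
  apply is_derive_Reals. unfold Rsq_one'. auto_derive; auto.
  change (match m with 0%nat => 1 | S _ => INR m + 1 end) with (INR (S m)). ring.
Qed.

Lemma Rprof_Fsq m t x : 0 < t -> Rprof (S (S m)) x t = sqrt (Fsq m t x).
Proof.
  intros Ht. unfold Fsq. destruct Req_EM_T as [E|E]; [|apply Rprof_Rsq; auto].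
  subst. unfold Rprof. destruct Req_EM_T; [|lra].
  replace (S (S m) - 1)%nat with (S m) by lia. reflexivity.
Qed.

Lemma Qf_pos m t : 0 < t -> 0 < Qf (S (S m)) t.
Proof.
  intros Ht. destruct (Req_dec t 1) as [->|E]; [|apply (Qm_bounds m t); auto].
  unfold Qf. destruct Req_EM_T; [|lra]. apply Rdiv_lt_0_compat; apply lt_0_INR; lia.
Qed.

(* The curvature identity for every t > 0; for t = 1 the profile is a
   cylinder of radius 1/k, of mean curvature (n - 1) k = n Q(1) k. *)
Lemma Fsq_curvature m t k x : 0 < t -> 0 < k -> 0 <= x <= 1 ->
  Hcurv (S (S m)) (yvar t x / k) ((1 - t) * sqrt (Fsq m t x))
    (- (1 - t) * k * Fsq' m t x / 2) = INR (S (S m)) * Qf (S (S m)) t * k.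
Proof.
  intros Ht Hk Hx. unfold Fsq, Fsq'. destruct Req_EM_T as [->|E]; [|apply Rsq_curvature; auto].
  unfold Hcurv, yvar, Qf. destruct Req_EM_T; [|lra].
  replace (S (S m) - 1)%nat with (S m) by lia.
  replace (1 + ((1 - 1) * sqrt (Rsq_one m x)) ^ 2) with 1 by ring. rewrite sqrt_1.
  assert (0 < INR (S (S m))) by (apply lt_0_INR; lia).
  field. repeat split; lra.
Qed.

Lemma zeta_Fsq m t x : 0 < t -> 0 <= x <= 1 ->
  zeta (S (S m)) x t = Zf (Fsq m t) (Fsq' m t) x.
Proof.
  intros Ht. apply zeta_eq_Zf; [apply Fsq_admissible; auto|]. intros; apply Rprof_Fsq; auto.
Qed.

Lemma zeta_inv_Fsq m t s : 0 < t -> 0 <= s <= Pf (S (S m)) t ->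
  0 <= zeta_inv (S (S m)) s t <= 1 /\
  Zf (Fsq m t) (Fsq' m t) (zeta_inv (S (S m)) s t) = s.
Proof.
  intros Ht Hs. pose proof (Fsq_admissible m t Ht) as HA.
  unfold Pf in Hs. rewrite zeta_Fsq in Hs by (auto; lra).
  destruct (continuous_onto (Zf (Fsq m t) (Fsq' m t)) (Zf_continuity _ _ HA) (Zf_1 _ _)
    (Rlt_le _ _ (Zf_0_pos _ _ HA)) s Hs) as [x [Hx Ex]].
  assert (Hex : exists x, 0 <= x <= 1 /\ zeta (S (S m)) x t = s)
    by (exists x; rewrite zeta_Fsq; auto).
  destruct (epsilon_spec (inhabits 0) _ Hex) as [H1 H2].
  split; auto. rewrite <- zeta_Fsq; auto.
Qed.

Lemma Pf_pos m t : 0 < t -> 0 < Pf (S (S m)) t.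
Proof.
  intros Ht. unfold Pf. rewrite zeta_Fsq by (auto; lra).
  apply Zf_0_pos, Fsq_admissible; auto.
Qed.

Definition kscale (n : nat) (d r t : R) : R := Qf n t * Pf n t / (Qf n r * d).

Section Rescaling.
Variables (m : nat) (d r t : R).
Hypotheses (Hd : 0 < d) (Hr : 0 < r) (Ht : 0 < t).

Let n := S (S m).

Lemma rescaling_data_pos : 0 < Qf n r /\ 0 < Qf n t /\ 0 < Pf n t.
Proof. repeat split; [apply Qf_pos | apply Qf_pos | apply Pf_pos]; auto. Qed.

Lemma kscale_pos : 0 < kscale n d r t.
Proof.
  pose proof rescaling_data_pos. apply Rdiv_lt_0_compat; apply Rmult_lt_0_compat; lra. Qed.

Lemma u_profile w :
  u n d w r t = profile (fun s => zeta_inv n s r) (1 - r) (kscale n d r t) w.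
Proof.
  pose proof rescaling_data_pos. unfold profile, kscale.
  replace (Qf n t * Pf n t / (Qf n r * d) * w) with (Qf n t * Pf n t * w / (Qf n r * d))
    by (field; lra).
  unfold u. field. repeat split; lra.
Qed.

Lemma eta_kscale : eta n d t = INR n * Qf n r * kscale n d r t.
Proof. pose proof rescaling_data_pos. unfold eta, kscale. field. lra. Qed.

Lemma length_kscale :
  Qf n r * Pf n r * d / (Qf n t * Pf n t) = Pf n r / kscale n d r t.
Proof. pose proof rescaling_data_pos. unfold kscale. field. repeat split; lra. Qed.

End Rescaling.

Theorem proposition2p1 (n : nat) (d r t : R) :
  (2 <= n)%nat -> 0 < d -> 0 < r -> 0 < t ->
  let L := Qf n r * Pf n r * d / (Qf n t * Pf n t) in
  exists u1 u2 : R -> R,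
    (forall z, 0 <= z <= L ->
       0 < u n d z r t /\
       deriv_within 0 L (fun w => u n d w r t) (u1 z) z /\
       deriv_within 0 L u1 (u2 z) z /\
       Hcurv n (u n d z r t) (u1 z) (u2 z) = eta n d t) /\
    u1 0 = 0 /\ u1 L = 0.
Proof.
  intros Hn Hd Hr Ht L.
  destruct n as [|[|m]]; [lia | lia |].
  set (F := Fsq m r). set (F' := Fsq' m r). set (X := fun s => zeta_inv (S (S m)) s r).
  set (k := kscale (S (S m)) d r t).
  pose proof (Fsq_admissible m r Hr) as HA.
  pose proof (Fsq'_continuity m r) as HF'c.
  pose proof (kscale_pos m d r t Hd Hr Ht) as Hk.
  assert (HP : Pf (S (S m)) r = Zf F F' 0) by (apply zeta_Fsq; auto; lra).
  pose proof (fun s => zeta_inv_Fsq m r s Hr) as HX.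
  exists (profile_slope F X (1 - r) k), (profile_bend F' X (1 - r) k).
  replace (fun w => u (S (S m)) d w r t) with (profile X (1 - r) k)
    by (apply functional_extensionality; intros; symmetry; apply u_profile; auto).
  unfold L. rewrite (length_kscale m d r t), (eta_kscale m d r t) by auto. fold k.
  split; [|apply (slope_ends F F' X _ _ k HA HP HX Hk)].
  intros z Hz. rewrite (u_profile m d r t) by auto. fold X k.
  pose proof (X_range F F' X _ k HX Hk z Hz) as Hx.
  split; [|split; [|split]].
  - apply Rdiv_lt_0_compat; auto. apply yvar_pos; auto.
  - apply (profile_deriv_within F F' X _ _ k HA HP HX Hk z Hz).
  - apply (slope_deriv_within F F' X _ _ k HA (fun x => HF'c x Hr) HP HX Hk z Hz).
  - apply Fsq_curvature; auto.
Qed.
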